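(* Let $D,\chi,\varepsilon,a>0$ and $\beta>0$, set $b=D\beta^2$, and assume $\omega^2:=\frac{a\chi}{D\varepsilon}-\beta^2>0$. Then there exist $\rho_0>0$, $\phi_0>0$, $r_0>0$ and functions $\rho\in C^0[0,\infty)$, $\phi\in C^2[0,\infty)$ with $\rho\ge 0$, $\phi\ge 0$, $\phi$ bounded, such that the function $p(\rho)=\frac{\varepsilon}{2}\rho^2$ is differentiable on $(0,\infty)$ and $$\partial_r\big(p(\rho)\big)=\chi\rho\,\phi_r,\qquad D\phi_{rr}+D\frac{\phi_r}{r}+a\rho-b\phi=0\quad\text{on }(0,\infty),$$ and moreover $\rho(0)=\rho_0$, $\phi(0)=\phi_0$, $\rho>0$ on $[0,r_0)$ and $\rho\equiv 0$ on $[r_0,\infty)$ (a ''half bump'' solution).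
   Context: This system is the radially symmetric stationary form (with zero velocity) of the hyperbolic-parabolic chemotaxis model $\rho_t+\mathrm{div}(\rho u)=0$, $(\rho u)_t+\mathrm{div}(\rho u\otimes u)+\nabla p(\rho)=\chi\rho\nabla\phi-\alpha\rho u$, $\delta\phi_t=D\Delta\phi+a\rho-b\phi$ on $\mathbb{R}^2$ with pressure $p(\rho)=\frac{\varepsilon}{2}\rho^2$; here $r=|x|$, $\rho(r)$ is cell density and $\phi(r)$ chemoattractant concentration. *)

From Stdlib Require Import Reals Lra.
From Coquelicot Require Import Coquelicot.
Open Scope R_scope.

Definition is_right_derive (f : R -> R) (x l : R) : Prop :=
  filterlim (fun h => (f (x + h) - f x) / h) (at_right 0) (locally l).

Definition C0_half (f : R -> R) : Prop :=
  (forall x, 0 < x -> continuous f x) /\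
  filterlim f (at_right 0) (locally (f 0)).

Definition C2_half (f : R -> R) : Prop :=
  exists d1 d2 : R -> R,
    (forall x, 0 < x -> is_derive f x (d1 x) /\ is_derive d1 x (d2 x)
                        /\ continuous d2 x) /\
    is_right_derive f 0 (d1 0) /\
    is_right_derive d1 0 (d2 0) /\
    filterlim d2 (at_right 0) (locally (d2 0)).

From Stdlib Require Import Reals Lra Lia Factorial.
From Coquelicot Require Import Coquelicot.
Open Scope R_scope.

(* Inside the support of rho the pressure balance eps rho rho' = chi rho phi' integrates to
   rho = chi/eps (phi - phi(r0)), and the phi-equation becomes the Bessel equation
   phi'' + phi'/r + om^2 phi = const, solved by K1 + A J0(om r); outside, rho = 0 and
   phi = B K0(beta r) is the decaying solution of phi'' + phi'/r = beta^2 phi.  Normalising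
   phi(r0) = 1 fixes A and B by continuity, and C^1 matching becomes a scalar equation in
   s = om r0.  Its left side changes sign between the first zero of J0 and the first zero of
   J0', where J0 is decreasing and negative, which makes rho positive inside; the two equations
   then match the second derivatives as well.  J0 and I0 are taken as power series,
   K0 = I0 * int_x^oo dt / (t I0(t)^2) by reduction of order, and the first zeros of J0 and J0'
   are located by partial sums with geometric tail bounds. *)

(** * The power series of J0 and I0 *)

Section BesselSeries.

Variable sg : R.
Hypothesis sg_neq0 : sg <> 0.

Definition bessel_coef (k : nat) : R := sg ^ k / INR (fact k) ^ 2.

Lemma Rabs_bessel_coef_S k :
  Rabs (bessel_coef (S k)) = Rabs sg * Rabs (bessel_coef k) / INR (S k) ^ 2.
Proof.
  unfold bessel_coef. rewrite fact_simpl, mult_INR.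
  assert (0 < INR (fact k)) by apply INR_fact_lt_0.
  assert (0 < INR (S k)) by (apply lt_0_INR; lia).
  unfold Rdiv. rewrite !Rabs_mult, !Rabs_inv, <- !RPow_abs, Rabs_mult.
  rewrite !(Rabs_pos_eq (INR _)) by lra.
  change (Rabs sg ^ S k) with (Rabs sg * Rabs sg ^ k). field. split; lra.
Qed.

Lemma bessel_coef_neq0 k : bessel_coef k <> 0.
Proof.
  unfold bessel_coef, Rdiv. apply Rmult_integral_contrapositive. split.
  - now apply pow_nonzero.
  - apply Rinv_neq_0_compat, pow_nonzero, INR_fact_neq_0.
Qed.

Lemma CV_radius_bessel_coef : CV_radius bessel_coef = p_infty.
Proof.
  apply CV_radius_infinite_DAlembert.
  - exact bessel_coef_neq0.
  - assert (Hinv : is_lim_seq (fun n => / INR (S n)) 0).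
    { apply (is_lim_seq_incr_1 (fun n => / INR n)).
      replace (Finite 0) with (Rbar_inv p_infty) by reflexivity.
      apply is_lim_seq_inv; [apply is_lim_seq_INR | discriminate]. }
    replace 0 with (Rabs sg * (0 * 0)) by ring.
    apply is_lim_seq_ext with (fun n => Rabs sg * (/ INR (S n) * / INR (S n))).
    + intros n. assert (0 < INR (S n)) by (apply lt_0_INR; lia).
      pose proof (Rabs_no_R0 _ (bessel_coef_neq0 n)).
      rewrite Rabs_div, Rabs_bessel_coef_S by apply bessel_coef_neq0.
      field. lra.
    + apply is_lim_seq_scal_l with (lu := Finite (0 * 0)), is_lim_seq_mult'; exact Hinv.
Qed.

Lemma bessel_coef_inside z : Rbar_lt (Rabs z) (CV_radius bessel_coef).
Proof. rewrite CV_radius_bessel_coef. exact I. Qed.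

Lemma bessel_coef_derive_inside z : Rbar_lt (Rabs z) (CV_radius (PS_derive bessel_coef)).
Proof. rewrite CV_radius_derive. apply bessel_coef_inside. Qed.

Lemma bessel_coef_derive2_inside z :
  Rbar_lt (Rabs z) (CV_radius (PS_derive (PS_derive bessel_coef))).
Proof. rewrite CV_radius_derive. apply bessel_coef_derive_inside. Qed.

Lemma PSeries_bessel_ode z :
  z * PSeries (PS_derive (PS_derive bessel_coef)) z + PSeries (PS_derive bessel_coef) z
  = sg * PSeries bessel_coef z.
Proof.
  rewrite <- PSeries_incr_1, <- PSeries_plus, <- PSeries_scal.
  2:{ apply CV_radius_inside. rewrite CV_radius_incr_1.
      apply bessel_coef_derive2_inside. }
  2:{ apply CV_radius_inside, bessel_coef_derive_inside. }
  apply PSeries_ext. intros [|n];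
    unfold PS_plus, PS_incr_1, PS_scal, PS_derive, bessel_coef;
    change plus with Rplus; change scal with Rmult.
  - change zero with 0. simpl. field.
  - rewrite !fact_simpl, !mult_INR, !S_INR.
    assert (0 < INR (fact n)) by apply INR_fact_lt_0.
    assert (0 <= INR n) by apply pos_INR.
    simpl pow. field. lra.
Qed.

(* [bessel sg x = sum_k sg^k (x/2)^(2k) / (k!)^2]: J0 for [sg = -1], I0 for [sg = 1]. *)
Definition bessel (x : R) : R := PSeries bessel_coef (x ^ 2 / 4).
Definition bessel1 (x : R) : R := PSeries (PS_derive bessel_coef) (x ^ 2 / 4) * (x / 2).
Definition bessel2 (x : R) : R :=
  PSeries (PS_derive (PS_derive bessel_coef)) (x ^ 2 / 4) * (x / 2) ^ 2
  + PSeries (PS_derive bessel_coef) (x ^ 2 / 4) / 2.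

Lemma is_derive_bessel x : is_derive bessel x (bessel1 x).
Proof.
  unfold bessel, bessel1. auto_derive.
  - apply ex_derive_PSeries, bessel_coef_inside.
  - rewrite Derive_PSeries by apply bessel_coef_inside.
    change (x * (x * 1) * / 4) with (x ^ 2 / 4). field.
Qed.

Lemma is_derive_bessel1 x : is_derive bessel1 x (bessel2 x).
Proof.
  unfold bessel1, bessel2. auto_derive.
  - apply ex_derive_PSeries, bessel_coef_derive_inside.
  - rewrite Derive_PSeries by apply bessel_coef_derive_inside.
    change (x * (x * 1) * / 4) with (x ^ 2 / 4). field.
Qed.

Lemma continuous_bessel2 x : continuous bessel2 x.
Proof.
  apply (ex_derive_continuous bessel2). unfold bessel2. auto_derive.
  split; [|split; [|exact I]]; apply ex_derive_PSeries.
  - apply bessel_coef_derive2_inside.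
  - apply bessel_coef_derive_inside.
Qed.

Lemma bessel_ode x : x <> 0 -> bessel2 x + bessel1 x / x = sg * bessel x.
Proof.
  intros Hx. unfold bessel, bessel1, bessel2.
  rewrite <- PSeries_bessel_ode. field. exact Hx.
Qed.

Lemma continuous_bessel x : continuous bessel x.
Proof. apply (ex_derive_continuous bessel). eexists. apply is_derive_bessel. Qed.

Lemma continuous_bessel1 x : continuous bessel1 x.
Proof. apply (ex_derive_continuous bessel1). eexists. apply is_derive_bessel1. Qed.

End BesselSeries.

Lemma bessel_0 sg : bessel sg 0 = 1.
Proof.
  unfold bessel. replace (0 ^ 2 / 4) with 0 by field.
  rewrite PSeries_0. unfold bessel_coef. simpl. field.
Qed.

Notation J0 := (bessel (-1)).
Notation J0' := (bessel1 (-1)).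
Notation J0'' := (bessel2 (-1)).
Notation I0 := (bessel 1).
Notation I0' := (bessel1 1).

(** * First zeros of J0 and J0' *)

Lemma Series_sub_sum_le (a : nat -> R) m q :
  0 <= q < 1 -> (forall k, (m < k)%nat -> Rabs (a (S k)) <= q * Rabs (a k)) ->
  ex_series a -> Rabs (Series a - sum_f_R0 a m) <= Rabs (a (S m)) / (1 - q).
Proof.
  intros Hq Hratio Ha.
  rewrite (Series_incr_n a (S m)) by (lia || exact Ha). simpl pred.
  replace (sum_f_R0 a m + Series (fun k => a (S m + k)%nat) - sum_f_R0 a m)
    with (Series (fun k => a (S m + k)%nat)) by ring.
  assert (Hgeom : forall k, Rabs (a (S m + k)%nat) <= Rabs (a (S m)) * q ^ k).
  { induction k as [|k IH].
    - rewrite Nat.add_0_r. simpl. lra.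
    - rewrite Nat.add_succ_r. eapply Rle_trans; [apply Hratio; lia|].
      simpl pow. rewrite <- Rmult_assoc, (Rmult_comm _ q), Rmult_assoc.
      apply Rmult_le_compat_l; lra. }
  assert (Hsum : is_series (fun k => Rabs (a (S m)) * q ^ k) (Rabs (a (S m)) * / (1 - q))).
  { apply (is_series_scal_l (Rabs (a (S m))) (fun k => q ^ k)), is_series_geom.
    rewrite Rabs_pos_eq; lra. }
  assert (Habs : ex_series (fun k => Rabs (a (S m + k)%nat))).
  { eapply (@ex_series_le R_AbsRing R_CompleteNormedModule); [|eexists; exact Hsum].
    intros k. change norm with Rabs. rewrite Rabs_Rabsolu. apply Hgeom. }
  eapply Rle_trans; [apply Series_Rabs, Habs|].
  unfold Rdiv. rewrite <- (is_series_unique _ _ Hsum).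
  apply Series_le; [|eexists; exact Hsum]. intros k. split; [apply Rabs_pos | apply Hgeom].
Qed.

Lemma PSeries_enclosure (c : nat -> R) z m q :
  0 <= q < 1 -> Rbar_lt (Rabs z) (CV_radius c) ->
  (forall k, Rabs (c (S k) * z ^ S k) <= Rabs z / INR (S k) ^ 2 * Rabs (c k * z ^ k)) ->
  Rabs z <= q * INR (S (S m)) ^ 2 ->
  Rabs (PSeries c z - sum_f_R0 (fun k => c k * z ^ k) m) <= Rabs (c (S m) * z ^ S m) / (1 - q).
Proof.
  intros Hq Hz Hratio Hm. apply Series_sub_sum_le; [exact Hq | |].
  - intros k Hk. eapply Rle_trans; [apply Hratio|]. apply Rmult_le_compat_r; [apply Rabs_pos|].
    assert (Hk' : INR (S (S m)) <= INR (S k)) by (apply le_INR; lia).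
    assert (0 < INR (S (S m))) by (apply lt_0_INR; lia).
    apply Rmult_le_reg_r with (INR (S k) ^ 2); [apply pow_lt; lra|].
    unfold Rdiv. rewrite Rmult_assoc, Rinv_l, Rmult_1_r by (apply pow_nonzero; lra).
    eapply Rle_trans; [exact Hm|]. apply Rmult_le_compat_l; [lra|]. apply pow_incr. lra.
  - eapply ex_series_ext; [|apply (CV_radius_inside c z Hz)].
    intros k. change scal with Rmult. rewrite pow_n_pow. apply Rmult_comm.
Qed.

Lemma Rabs_m1 : Rabs (-1) = 1.
Proof. rewrite Rabs_left; lra. Qed.

Lemma J0_term_ratio z k :
  Rabs (bessel_coef (-1) (S k) * z ^ S k)
  <= Rabs z / INR (S k) ^ 2 * Rabs (bessel_coef (-1) k * z ^ k).
Proof.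
  rewrite !Rabs_mult, Rabs_bessel_coef_S, Rabs_m1.
  assert (0 < INR (S k)) by (apply lt_0_INR; lia).
  change (z ^ S k) with (z * z ^ k). rewrite Rabs_mult. right. field. lra.
Qed.

Lemma J0'_term_ratio z k :
  Rabs (PS_derive (bessel_coef (-1)) (S k) * z ^ S k)
  <= Rabs z / INR (S k) ^ 2 * Rabs (PS_derive (bessel_coef (-1)) k * z ^ k).
Proof.
  unfold PS_derive. rewrite !Rabs_mult, (Rabs_bessel_coef_S _ (S k)), Rabs_m1.
  assert (0 < INR (S k)) by (apply lt_0_INR; lia).
  assert (INR (S k) <= INR (S (S k))) by (apply le_INR; lia).
  rewrite !(Rabs_pos_eq (INR _)) by lra.
  change (z ^ S k) with (z * z ^ k). rewrite Rabs_mult.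
  set (X := Rabs z * Rabs (bessel_coef (-1) (S k)) * Rabs (z ^ k)).
  assert (0 <= X) by (apply Rmult_le_pos; [apply Rmult_le_pos|]; apply Rabs_pos).
  replace (INR (S (S k)) * (1 * Rabs (bessel_coef (-1) (S k)) / INR (S (S k)) ^ 2)
           * (Rabs z * Rabs (z ^ k)))
    with (X * / INR (S (S k))) by (unfold X; field; lra).
  replace (Rabs z / INR (S k) ^ 2 * (INR (S k) * Rabs (bessel_coef (-1) (S k)) * Rabs (z ^ k)))
    with (X * / INR (S k)) by (unfold X; field; lra).
  apply Rmult_le_compat_l; [lra|]. apply Rinv_le_contravar; lra.
Qed.

Lemma J0'_neg x : 0 < x <= 14 / 5 -> J0' x < 0.
Proof.
  intros Hx. unfold bessel1. set (z := x ^ 2 / 4).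
  assert (Hz : 0 <= z <= 2) by (unfold z; simpl; nra).
  enough (PSeries (PS_derive (bessel_coef (-1))) z < 0) by nra.
  assert (Hz4 : z ^ 4 <= 16) by (replace 16 with (2 ^ 4) by ring; apply pow_incr; lra).
  pose proof (PSeries_enclosure _ z 3 (1 / 10) ltac:(lra)
    (bessel_coef_derive_inside (-1) ltac:(lra) z) (J0'_term_ratio z)
    ltac:(rewrite Rabs_pos_eq by lra; simpl; lra)) as Hencl.
  apply Rabs_le_between in Hencl.
  assert (Hc4 : PS_derive (bessel_coef (-1)) 4 = - (1 / 2880))
    by (unfold PS_derive, bessel_coef; rewrite !fact_simpl, !mult_INR; simpl; field).
  rewrite Hc4, Rabs_mult, Rabs_Ropp, !Rabs_pos_eq in Hencl by (try apply pow_le; lra).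
  assert (Hsum : sum_f_R0 (fun k => PS_derive (bessel_coef (-1)) k * z ^ k) 3
                 = -1 + z / 2 - z ^ 2 / 12 + z ^ 3 / 144)
    by (unfold PS_derive, bessel_coef; cbn [sum_f_R0]; rewrite !fact_simpl, !mult_INR;
        simpl; field).
  rewrite Hsum in Hencl. nra.
Qed.

Lemma J0_14_5_neg : J0 (14 / 5) < 0.
Proof.
  unfold bessel. replace ((14 / 5) ^ 2 / 4) with (49 / 25) by field.
  pose proof (PSeries_enclosure _ (49 / 25) 5 (1 / 10) ltac:(lra)
    (bessel_coef_inside (-1) ltac:(lra) _) (J0_term_ratio _)
    ltac:(rewrite Rabs_pos_eq by lra; simpl; lra)) as Hencl.
  apply Rabs_le_between in Hencl.
  assert (Hc6 : bessel_coef (-1) 6 = 1 / 518400)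
    by (unfold bessel_coef; rewrite !fact_simpl, !mult_INR; simpl; field).
  rewrite Hc6, Rabs_pos_eq in Hencl by (apply Rmult_le_pos; [|apply pow_le]; lra).
  assert (Hsum : sum_f_R0 (fun k => bessel_coef (-1) k * (49 / 25) ^ k) 5
                 = - 406804291 / 2197265625)
    by (unfold bessel_coef; cbn [sum_f_R0]; rewrite !fact_simpl, !mult_INR; simpl; field).
  rewrite Hsum in Hencl. lra.
Qed.

Lemma J0'_4_pos : 0 < J0' 4.
Proof.
  unfold bessel1. replace (4 ^ 2 / 4) with 4 by field.
  enough (0 < PSeries (PS_derive (bessel_coef (-1))) 4) by lra.
  pose proof (PSeries_enclosure _ 4 7 (1 / 10) ltac:(lra)
    (bessel_coef_derive_inside (-1) ltac:(lra) _) (J0'_term_ratio _)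
    ltac:(rewrite Rabs_pos_eq by lra; simpl; lra)) as Hencl.
  apply Rabs_le_between in Hencl.
  assert (Hc8 : PS_derive (bessel_coef (-1)) 8 = - (1 / 14631321600))
    by (unfold PS_derive, bessel_coef; rewrite !fact_simpl, !mult_INR; simpl; field).
  rewrite Hc8, Rabs_mult, Rabs_Ropp, !Rabs_pos_eq in Hencl by (try apply pow_le; lra).
  assert (Hsum : sum_f_R0 (fun k => PS_derive (bessel_coef (-1)) k * 4 ^ k) 7 = 3277 / 99225)
    by (unfold PS_derive, bessel_coef; cbn [sum_f_R0]; rewrite !fact_simpl, !mult_INR;
        simpl; field).
  rewrite Hsum in Hencl. lra.
Qed.

Lemma continuous_Rabs_lt f c e : continuous f c -> 0 < e ->
  exists d, 0 < d /\ forall y, Rabs (y - c) < d -> Rabs (f y - f c) < e.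
Proof.
  intros Hf He. destruct (proj1 (filterlim_locally f (f c)) Hf (mkposreal e He)) as [d Hd].
  exists d. split; [apply cond_pos|]. intros y Hy. exact (Hd y Hy).
Qed.

Lemma first_zero f a b : a < b -> (forall x, a <= x <= b -> continuous f x) ->
  f a < 0 -> 0 <= f b ->
  exists c, a < c <= b /\ f c = 0 /\ forall x, a <= x < c -> f x < 0.
Proof.
  intros Hab Hc Ha Hb.
  set (E := fun x => a <= x <= b /\ forall t, a <= t <= x -> f t < 0).
  assert (HEa : E a) by (split; [lra | intros t Ht; replace t with a by lra; exact Ha]).
  destruct (completeness E) as [c [Hub Hlub]].
  { exists b. intros x [Hx _]. lra. }
  { exists a. exact HEa. }
  assert (Hac : a <= c) by (apply Hub, HEa).
  assert (Hcb : c <= b) by (apply Hlub; intros x [Hx _]; lra).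
  assert (Hneg : forall t, a <= t < c -> f t < 0).
  { intros t Ht. destruct (Rlt_dec (f t) 0) as [Hft | Hft]; [exact Hft | exfalso].
    enough (Ht_ub : is_upper_bound E t) by (pose proof (Hlub t Ht_ub); lra).
    intros x [Hx Hxf]. destruct (Rle_dec x t) as [Hxt | Hxt]; [exact Hxt | exfalso].
    apply Hft, Hxf. lra. }
  assert (Hfc : f c = 0).
  { destruct (Rtotal_order (f c) 0) as [Hlt | [Heq | Hgt]]; [exfalso | exact Heq | exfalso].
    - destruct (continuous_Rabs_lt f c (- f c) (Hc c ltac:(lra)) ltac:(lra)) as [d [Hd Hnear]].
      assert (c < b) by (destruct (Req_dec c b); [subst; lra | lra]).
      set (y := Rmin (c + d / 2) b).
      assert (Hcy : c < y) by (apply Rmin_glb_lt; lra).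
      enough (Ey : E y) by (pose proof (Hub y Ey); lra).
      split; [split; [lra | apply Rmin_r] |]. intros t Ht.
      destruct (Rlt_dec t c); [apply Hneg; lra|].
      assert (Hy : y <= c + d / 2) by apply Rmin_l.
      specialize (Hnear t ltac:(rewrite Rabs_pos_eq; lra)). apply Rabs_lt_between in Hnear. lra.
    - destruct (continuous_Rabs_lt f c (f c) (Hc c ltac:(lra)) Hgt) as [d [Hd Hnear]].
      assert (a < c) by (destruct (Req_dec a c); [subst; lra | lra]).
      set (t := Rmax a (c - d / 2)).
      assert (Ht : a <= t < c) by (split; [apply Rmax_l | apply Rmax_lub_lt; lra]).
      assert (c - d / 2 <= t) by apply Rmax_r.
      specialize (Hnear t ltac:(rewrite Rabs_left; lra)). apply Rabs_lt_between in Hnear.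
      specialize (Hneg t Ht). lra. }
  exists c. repeat split; [| exact Hcb | exact Hfc | exact Hneg].
  destruct (Req_dec a c); [subst; lra | lra].
Qed.

Lemma decreasing_of_derive_neg f df a b :
  (forall x, a <= x <= b -> is_derive f x (df x)) -> (forall x, a < x < b -> df x < 0) ->
  forall p q, a <= p < q -> q <= b -> f q < f p.
Proof.
  intros Hd Hneg p q Hpq Hqb.
  destruct (MVT_cor2 f df p q (proj2 Hpq)) as [c [Hmvt Hc]].
  { intros c Hc. apply is_derive_Reals, Hd. lra. }
  assert (df c < 0) by (apply Hneg; lra).
  assert (df c * (q - p) < 0) by (apply Rmult_neg_pos; lra). lra.
Qed.

(* Numerically j0 = 2.404... and j1 = 3.831... *)
Lemma J0_first_zeros : exists j0 j1, 0 < j0 < j1 /\ J0 j0 = 0 /\ J0' j1 = 0 /\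
  forall x, 0 < x < j1 -> J0' x < 0.
Proof.
  destruct (first_zero J0' (14 / 5) 4 ltac:(lra)
    (fun x _ => continuous_bessel1 (-1) ltac:(lra) x)
    (J0'_neg (14 / 5) ltac:(lra)) (Rlt_le _ _ J0'_4_pos)) as [j1 [Hj1 [HJ0'j1 HJ0'neg]]].
  destruct (first_zero (fun x => - J0 x) 0 (14 / 5) ltac:(lra)
    (fun x _ => continuous_opp _ x (continuous_bessel (-1) ltac:(lra) x))
    ltac:(cbv beta; rewrite bessel_0; lra) ltac:(cbv beta; pose proof J0_14_5_neg; lra))
    as [j0 [Hj0 [HJ0j0 _]]].
  exists j0, j1. repeat split; [lra | lra | lra | exact HJ0'j1 |].
  intros x Hx. destruct (Rle_dec x (14 / 5)).
  - apply J0'_neg. lra.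
  - apply HJ0'neg. lra.
Qed.

(** * Macdonald's function K0 *)

Lemma PSeries_le_nonneg_coef (c : nat -> R) z1 z2 : (forall k, 0 <= c k) ->
  0 <= z1 <= z2 -> Rbar_lt (Rabs z2) (CV_radius c) -> PSeries c z1 <= PSeries c z2.
Proof.
  intros Hc Hz Hin. apply Series_le.
  - intros k. split.
    + apply Rmult_le_pos; [apply Hc | apply pow_le; lra].
    + apply Rmult_le_compat_l; [apply Hc | apply pow_incr; lra].
  - eapply ex_series_ext; [|apply (CV_radius_inside c z2 Hin)].
    intros k. change scal with Rmult. rewrite pow_n_pow. apply Rmult_comm.
Qed.

Lemma bessel_coef_1_nonneg k : 0 <= bessel_coef 1 k.
Proof.
  unfold bessel_coef. rewrite pow1.
  apply Rlt_le, Rdiv_lt_0_compat; [lra | apply pow_lt, INR_fact_lt_0].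
Qed.

Lemma PS_derive_bessel_coef_1_nonneg k : 0 <= PS_derive (bessel_coef 1) k.
Proof. apply Rmult_le_pos; [apply pos_INR | apply bessel_coef_1_nonneg]. Qed.

Lemma I0_ge_1 x : 1 <= I0 x.
Proof.
  rewrite <- (bessel_0 1) at 1. unfold bessel.
  apply PSeries_le_nonneg_coef; [exact bessel_coef_1_nonneg | | apply bessel_coef_inside; lra].
  assert (0 <= x ^ 2) by apply pow2_ge_0. replace (0 ^ 2 / 4) with 0 by field. lra.
Qed.

Lemma I0_pos x : 0 < I0 x.
Proof. pose proof (I0_ge_1 x). lra. Qed.

Lemma PSeries_I0'_ge_1 z : 0 <= z -> 1 <= PSeries (PS_derive (bessel_coef 1)) z.
Proof.
  intros Hz. apply Rle_trans with (PSeries (PS_derive (bessel_coef 1)) 0).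
  - rewrite PSeries_0. unfold PS_derive, bessel_coef. simpl. lra.
  - apply PSeries_le_nonneg_coef; [exact PS_derive_bessel_coef_1_nonneg | lra |].
    apply bessel_coef_derive_inside. lra.
Qed.

Lemma I0'_pos x : 0 < x -> 0 < I0' x.
Proof.
  intros Hx. unfold bessel1.
  assert (1 <= PSeries (PS_derive (bessel_coef 1)) (x ^ 2 / 4))
    by (apply PSeries_I0'_ge_1; pose proof (pow2_ge_0 x); lra).
  nra.
Qed.

Lemma mul_I0'_le x y : 0 <= x <= y -> x * I0' x <= y * I0' y.
Proof.
  intros Hxy. unfold bessel1.
  assert (0 <= x ^ 2 <= y ^ 2) by (simpl; nra).
  assert (1 <= PSeries (PS_derive (bessel_coef 1)) (x ^ 2 / 4)) by (apply PSeries_I0'_ge_1; lra).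
  assert (PSeries (PS_derive (bessel_coef 1)) (x ^ 2 / 4)
          <= PSeries (PS_derive (bessel_coef 1)) (y ^ 2 / 4)).
  { apply PSeries_le_nonneg_coef; [exact PS_derive_bessel_coef_1_nonneg | lra |].
    apply bessel_coef_derive_inside. lra. }
  replace (x * (PSeries (PS_derive (bessel_coef 1)) (x ^ 2 / 4) * (x / 2)))
    with (PSeries (PS_derive (bessel_coef 1)) (x ^ 2 / 4) * (x ^ 2 / 2)) by (simpl; field).
  replace (y * (PSeries (PS_derive (bessel_coef 1)) (y ^ 2 / 4) * (y / 2)))
    with (PSeries (PS_derive (bessel_coef 1)) (y ^ 2 / 4) * (y ^ 2 / 2)) by (simpl; field).
  apply Rmult_le_compat; lra.
Qed.

Definition K0_weight (t : R) : R := / (t * I0 t ^ 2).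

Lemma K0_weight_pos t : 0 < t -> 0 < K0_weight t.
Proof.
  intros Ht. apply Rinv_0_lt_compat, Rmult_lt_0_compat; [exact Ht | apply pow_lt, I0_pos].
Qed.

Lemma continuous_K0_weight t : 0 < t -> continuous K0_weight t.
Proof.
  intros Ht. apply (ex_derive_continuous K0_weight). unfold K0_weight. auto_derive.
  - repeat split. exists (I0' t). apply is_derive_bessel. lra.
  - pose proof (pow_lt _ 2 (I0_pos t)). simpl in *. apply Rgt_not_eq, Rmult_lt_0_compat; lra.
Qed.

Lemma ex_RInt_K0_weight x y : 0 < x -> 0 < y -> ex_RInt K0_weight x y.
Proof.
  intros Hx Hy. apply (@ex_RInt_continuous R_CompleteNormedModule). intros z Hz.
  apply continuous_K0_weight. pose proof (Rmin_glb_lt x y 0 Hx Hy). lra.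
Qed.

Lemma RInt_K0_weight_Chasles x y z : 0 < x -> 0 < y -> 0 < z ->
  RInt K0_weight x y + RInt K0_weight y z = RInt K0_weight x z.
Proof.
  intros. apply (@RInt_Chasles R_CompleteNormedModule); apply ex_RInt_K0_weight; assumption.
Qed.

Lemma RInt_K0_weight_ge0 x y : 0 < x <= y -> 0 <= RInt K0_weight x y.
Proof.
  intros Hxy. apply RInt_ge_0; [lra | apply ex_RInt_K0_weight; lra |].
  intros t Ht. apply Rlt_le, K0_weight_pos. lra.
Qed.

Lemma is_RInt_I0'_div_sq x y : is_RInt (fun t => I0' t / I0 t ^ 2) x y (/ I0 x - / I0 y).
Proof.
  assert (E : / I0 x - / I0 y = minus (- / I0 y) (- / I0 x))
    by (unfold minus, plus, opp; simpl; ring).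
  rewrite E.
  apply (is_RInt_derive (fun t => - / I0 t)).
  - intros t _. pose proof (I0_pos t).
    pose proof (is_derive_opp _ t _
      (is_derive_inv I0 t _ (is_derive_bessel 1 ltac:(lra) t) ltac:(lra))) as Hd.
    simpl in Hd. replace (I0' t / I0 t ^ 2) with (- (- I0' t / I0 t ^ 2)) by (unfold Rdiv; ring).
    exact Hd.
  - intros t _. pose proof (I0_pos t).
    apply (ex_derive_continuous (fun t => I0' t / I0 t ^ 2)). auto_derive.
    repeat split; [eexists; apply is_derive_bessel1; lra | eexists; apply is_derive_bessel; lra |].
    simpl. nra.
Qed.

(* For t >= x, t I0'(t) >= x I0'(x) bounds the weight by a multiple of (-1/I0)'. *)
Lemma RInt_K0_weight_le x y : 0 < x <= y -> RInt K0_weight x y <= / (x * I0' x * I0 x).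
Proof.
  intros Hxy. set (c := / (x * I0' x)).
  pose proof (I0'_pos x ltac:(lra)). pose proof (I0_pos x). pose proof (I0_pos y).
  assert (Hc : 0 < c) by (apply Rinv_0_lt_compat, Rmult_lt_0_compat; lra).
  assert (Hint : is_RInt (fun t => c * (I0' t / I0 t ^ 2)) x y (c * (/ I0 x - / I0 y)))
    by exact (is_RInt_scal _ x y c _ (is_RInt_I0'_div_sq x y)).
  apply Rle_trans with (c * (/ I0 x - / I0 y)).
  - rewrite <- (is_RInt_unique _ _ _ _ Hint).
    apply RInt_le; [lra | apply ex_RInt_K0_weight; lra | eexists; exact Hint |].
    intros t Ht. pose proof (I0_pos t). pose proof (I0'_pos t ltac:(lra)).
    pose proof (mul_I0'_le x t ltac:(lra)).
    unfold K0_weight, c. apply Rmult_le_reg_l with (x * I0' x * (t * I0 t ^ 2)).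
    { apply Rmult_lt_0_compat; [nra | apply Rmult_lt_0_compat; [lra | apply pow_lt; lra]]. }
    field_simplify; [nra | ..]; repeat split; try lra; apply pow_nonzero; lra.
  - replace (/ (x * I0' x * I0 x)) with (c * / I0 x) by (unfold c; field; lra).
    assert (0 < / I0 y) by (apply Rinv_0_lt_compat; lra). nra.
Qed.

(* [K0_tail x] is the improper integral of [K0_weight] over [x, +oo). *)
Definition K0_tail (x : R) : R :=
  real (Lim_seq (fun n => RInt K0_weight 1 (INR n + 1))) - RInt K0_weight 1 x.

Lemma INR_add1_pos n : 0 < INR n + 1.
Proof. pose proof (pos_INR n). lra. Qed.

Lemma is_lim_seq_K0_tail x : 0 < x ->
  is_lim_seq (fun n => RInt K0_weight x (INR n + 1)) (K0_tail x).
Proof.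
  intros Hx. set (u := fun n => RInt K0_weight 1 (INR n + 1)).
  assert (Hu : ex_finite_lim_seq u).
  { apply ex_finite_lim_seq_incr with (/ (1 * I0' 1 * I0 1)).
    - intros n. unfold u. rewrite <- (RInt_K0_weight_Chasles 1 (INR n + 1) (INR (S n) + 1))
        by (lra || apply INR_add1_pos).
      pose proof (RInt_K0_weight_ge0 (INR n + 1) (INR (S n) + 1)
        ltac:(rewrite S_INR; pose proof (INR_add1_pos n); lra)). lra.
    - intros n. apply RInt_K0_weight_le. pose proof (pos_INR n). lra. }
  apply is_lim_seq_ext with (fun n => u n - RInt K0_weight 1 x).
  - intros n. unfold u. rewrite <- (RInt_K0_weight_Chasles 1 x (INR n + 1))
      by (lra || apply INR_add1_pos). ring.
  - apply is_lim_seq_minus'; [apply Lim_seq_correct', Hu | apply is_lim_seq_const].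
Qed.

Lemma K0_tail_le x : 0 < x -> K0_tail x <= / (x * I0' x * I0 x).
Proof.
  intros Hx. pose proof (I0'_pos x Hx). pose proof (I0_pos x).
  assert (0 < / (x * I0' x * I0 x))
    by (apply Rinv_0_lt_compat, Rmult_lt_0_compat; [apply Rmult_lt_0_compat|]; lra).
  refine (is_lim_seq_le _ _ _ _ _ (is_lim_seq_K0_tail x Hx) (is_lim_seq_const _)).
  intros n. destruct (Rle_dec x (INR n + 1)).
  - apply RInt_K0_weight_le. lra.
  - pose proof (RInt_K0_weight_Chasles x (INR n + 1) x Hx (INR_add1_pos n) Hx) as Hloop.
    rewrite RInt_point in Hloop. change zero with 0 in Hloop.
    pose proof (RInt_K0_weight_ge0 (INR n + 1) x ltac:(pose proof (INR_add1_pos n); lra)). lra.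
Qed.

Lemma K0_tail_pos x : 0 < x -> 0 < K0_tail x.
Proof.
  intros Hx.
  assert (Hpos : 0 < RInt K0_weight x (x + 1)).
  { apply RInt_gt_0; [lra | intros; apply K0_weight_pos; lra |].
    intros; apply continuous_K0_weight; lra. }
  enough (Hle : Rbar_le (RInt K0_weight x (x + 1)) (K0_tail x)) by (simpl in Hle; lra).
  apply (is_lim_seq_le_loc _ _ _ _ ) with (2 := is_lim_seq_const _)
    (3 := is_lim_seq_K0_tail x Hx).
  destruct (nfloor_ex (x + 1)) as [N HN]; [lra|].
  exists (S N). intros n Hn. apply le_INR in Hn. rewrite S_INR in Hn.
  rewrite <- (RInt_K0_weight_Chasles x (x + 1) (INR n + 1)) by (lra || apply INR_add1_pos).
  pose proof (RInt_K0_weight_ge0 (x + 1) (INR n + 1) ltac:(lra)). lra.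
Qed.

Lemma is_derive_K0_tail x : 0 < x -> is_derive K0_tail x (- K0_weight x).
Proof.
  intros Hx. unfold K0_tail.
  replace (- K0_weight x) with (0 - K0_weight x) by ring.
  apply (is_derive_minus (fun _ => _) (fun y => RInt K0_weight 1 y));
    [exact (is_derive_const _ x) |].
  apply (is_derive_RInt K0_weight _ 1); [| apply continuous_K0_weight, Hx].
  exists (mkposreal (x / 2) ltac:(lra)). intros y Hy.
  change (Rabs (y - x) < x / 2) in Hy. apply Rabs_lt_between in Hy.
  apply (@RInt_correct R_CompleteNormedModule), ex_RInt_K0_weight; lra.
Qed.

(* Reduction of order: [I0] times its tail integral is Macdonald's [K0], the solution of
   [u'' + u'/x = u] decaying at infinity. *)
Definition K0 (x : R) : R := I0 x * K0_tail x.
Definition K0' (x : R) : R := I0' x * K0_tail x - / (x * I0 x).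
Definition K0'' (x : R) : R := K0 x - K0' x / x.

Lemma is_derive_K0 x : 0 < x -> is_derive K0 x (K0' x).
Proof.
  intros Hx. pose proof (I0_pos x). unfold K0, K0'. auto_derive.
  - split; [eexists; apply is_derive_bessel; lra | split; [|exact I]].
    eexists; apply is_derive_K0_tail, Hx.
  - change (fun y => I0 y) with I0. change (fun y => K0_tail y) with K0_tail.
    rewrite (is_derive_unique _ _ _ (is_derive_bessel 1 ltac:(lra) x)),
      (is_derive_unique _ _ _ (is_derive_K0_tail x Hx)).
    unfold K0_weight. field. lra.
Qed.

Lemma is_derive_K0' x : 0 < x -> is_derive K0' x (K0'' x).
Proof.
  intros Hx. pose proof (I0_pos x). unfold K0'. auto_derive.
  - repeat split.
    + eexists; apply is_derive_bessel1; lra.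
    + eexists; apply is_derive_K0_tail, Hx.
    + eexists; apply is_derive_bessel; lra.
    + apply Rgt_not_eq, Rmult_lt_0_compat; lra.
  - change (fun y => I0 y) with I0. change (fun y => K0_tail y) with K0_tail.
    change (fun y => I0' y) with I0'.
    rewrite (is_derive_unique _ _ _ (is_derive_bessel 1 ltac:(lra) x)),
      (is_derive_unique _ _ _ (is_derive_bessel1 1 ltac:(lra) x)),
      (is_derive_unique _ _ _ (is_derive_K0_tail x Hx)).
    pose proof (bessel_ode 1 ltac:(lra) x ltac:(lra)).
    replace (bessel2 1 x) with (I0 x - I0' x / x) by lra.
    unfold K0'', K0, K0', K0_weight. field. lra.
Qed.

Lemma continuous_K0'' x : 0 < x -> continuous K0'' x.
Proof.
  intros Hx. apply (ex_derive_continuous K0''). unfold K0''. auto_derive.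
  repeat split; [eexists; apply is_derive_K0 | eexists; apply is_derive_K0' | ]; lra.
Qed.

Lemma K0_pos x : 0 < x -> 0 < K0 x.
Proof. intros Hx. apply Rmult_lt_0_compat; [apply I0_pos | apply K0_tail_pos, Hx]. Qed.

Lemma K0_le x : 0 < x -> K0 x <= / (x * I0' x).
Proof.
  intros Hx. pose proof (I0_pos x). pose proof (I0'_pos x Hx). pose proof (K0_tail_le x Hx).
  unfold K0. replace (/ (x * I0' x)) with (I0 x * / (x * I0' x * I0 x)) by (field; lra).
  apply Rmult_le_compat_l; lra.
Qed.

Lemma K0'_nonpos x : 0 < x -> K0' x <= 0.
Proof.
  intros Hx. pose proof (I0_pos x). pose proof (I0'_pos x Hx). pose proof (K0_tail_le x Hx).
  unfold K0'. replace (/ (x * I0 x)) with (I0' x * / (x * I0' x * I0 x)) by (field; lra).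
  assert (I0' x * K0_tail x <= I0' x * / (x * I0' x * I0 x)) by (apply Rmult_le_compat_l; lra).
  lra.
Qed.

(** * Matching and gluing *)

(* [mismatch (beta / om) s = 0] is the C^1 matching condition at [r0 = s / om] between the
   inner and outer profiles of the half bump, once their amplitudes are fixed by continuity. *)
Definition mismatch (k s : R) : R := K0' (k * s) * J0 s + k * J0' s * K0 (k * s).

Lemma continuous_mismatch k s : 0 < k -> 0 < s -> continuous (mismatch k) s.
Proof.
  intros Hk Hs. assert (0 < k * s) by (apply Rmult_lt_0_compat; lra).
  apply (ex_derive_continuous (mismatch k)). unfold mismatch. auto_derive.
  repeat split; [exists (K0'' (k * s)); apply is_derive_K0'; lra
    | exists (J0' s); apply is_derive_bessel; lra
    | exists (J0'' s); apply is_derive_bessel1; lra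
    | exists (K0' (k * s)); apply is_derive_K0; lra].
Qed.

Lemma exists_matching_point k : 0 < k -> exists s, 0 < s /\ J0 s < 0 /\
  (forall p q, 0 <= p < q -> q <= s -> J0 q < J0 p) /\ mismatch k s = 0.
Proof.
  intros Hk. destruct J0_first_zeros as [j0 [j1 [Hj [HJ0 [HJ0' HJ0'neg]]]]].
  assert (Hdec : forall p q, 0 <= p < q -> q <= j1 -> J0 q < J0 p).
  { apply (decreasing_of_derive_neg J0 J0'); [|exact HJ0'neg].
    intros x _. apply is_derive_bessel. lra. }
  assert (Hj1 : J0 j1 < 0) by (rewrite <- HJ0; apply Hdec; lra).
  destruct (first_zero (mismatch k) j0 j1 ltac:(lra)
    (fun x Hx => continuous_mismatch k x Hk ltac:(lra))) as [s [Hs [Hms Hneg]]].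
  - unfold mismatch. rewrite HJ0, Rmult_0_r, Rplus_0_l.
    apply Rmult_neg_pos; [apply Rmult_pos_neg; [exact Hk | apply HJ0'neg; lra] |].
    apply K0_pos, Rmult_lt_0_compat; lra.
  - unfold mismatch. rewrite HJ0', Rmult_0_r, Rmult_0_l, Rplus_0_r.
    pose proof (K0'_nonpos (k * j1) ltac:(apply Rmult_lt_0_compat; lra)). nra.
  - exists s. repeat split; [lra | rewrite <- HJ0; apply Hdec; lra | | exact Hms].
    intros p q Hpq Hq. apply Hdec; lra.
Qed.

Lemma is_derive_eq (f : R -> R) (x l l' : R) : is_derive f x l -> l = l' -> is_derive f x l'.
Proof. intros Hf <-. exact Hf. Qed.

Definition C2_at (u u1 u2 : R -> R) (x : R) : Prop :=
  is_derive u x (u1 x) /\ is_derive u1 x (u2 x) /\ continuous u2 x.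

Lemma is_derive_scale_comp (f : R -> R) C k x l :
  is_derive f (k * x) l -> is_derive (fun t => C * f (k * t)) x (C * k * l).
Proof.
  intros Hf. rewrite Rmult_assoc. apply is_derive_scal.
  refine (is_derive_comp f (fun t => k * t) x l k Hf _).
  auto_derive; [exact I | ring].
Qed.

Lemma continuous_scale_comp (f : R -> R) C k x :
  continuous f (k * x) -> continuous (fun t => C * f (k * t)) x.
Proof.
  intros Hf. apply (continuous_mult (fun _ => C) (fun t => f (k * t))).
  - apply continuous_const.
  - apply (continuous_comp (fun t => k * t) f); [|exact Hf].
    apply (ex_derive_continuous (fun t => k * t)). auto_derive. exact I.
Qed.

Lemma C2_at_scale u u1 u2 C k x : C2_at u u1 u2 (k * x) ->
  C2_at (fun t => C * u (k * t)) (fun t => C * k * u1 (k * t))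
            (fun t => C * k * k * u2 (k * t)) x.
Proof.
  intros [H0 [H1 H2]]. split; [|split].
  - apply is_derive_scale_comp, H0.
  - apply is_derive_scale_comp, H1.
  - apply continuous_scale_comp, H2.
Qed.

Lemma C2_at_shift u u1 u2 K x :
  C2_at u u1 u2 x -> C2_at (fun t => K + u t) u1 u2 x.
Proof.
  intros [H0 H12]. split; [|exact H12].
  rewrite <- (Rplus_0_l (u1 x)).
  apply (is_derive_plus (fun _ => K) u); [exact (is_derive_const K x) | exact H0].
Qed.

Lemma C2_at_bessel sg x : sg <> 0 -> C2_at (bessel sg) (bessel1 sg) (bessel2 sg) x.
Proof.
  intros Hsg. split; [|split];
    [apply is_derive_bessel | apply is_derive_bessel1 | apply continuous_bessel2]; exact Hsg.
Qed.

Lemma C2_at_K0 x : 0 < x -> C2_at K0 K0' K0'' x.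
Proof.
  intros Hx. split; [|split];
    [apply is_derive_K0 | apply is_derive_K0' | apply continuous_K0'']; exact Hx.
Qed.

Lemma radial_ode_scale (u u1 u2 : R -> R) c C k t : k <> 0 -> t <> 0 ->
  u2 (k * t) + u1 (k * t) / (k * t) = c * u (k * t) ->
  C * k * k * u2 (k * t) + C * k * u1 (k * t) / t = c * k ^ 2 * (C * u (k * t)).
Proof.
  intros Hk Ht Hode. replace (C * k * u1 (k * t) / t) with (C * k * k * (u1 (k * t) / (k * t)))
    by (field; lra).
  replace (c * k ^ 2 * (C * u (k * t))) with (C * k * k * (c * u (k * t))) by ring.
  rewrite <- Hode. ring.
Qed.

Lemma is_derive_half_square_affine (f : R -> R) e c x l : e <> 0 -> is_derive f x l ->
  is_derive (fun t => e / 2 * (c / e * (f t - 1)) ^ 2) x (c * (c / e * (f x - 1)) * l).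
Proof.
  intros He Hf. auto_derive.
  - exact (ex_intro _ l Hf).
  - change (fun y => f y) with f. rewrite (is_derive_unique _ _ _ Hf). field. exact He.
Qed.

Definition glue (r0 : R) (f g : R -> R) (x : R) : R := if Rle_dec x r0 then f x else g x.

Lemma glue_le r0 f g x : x <= r0 -> glue r0 f g x = f x.
Proof. intros Hx. unfold glue. destruct (Rle_dec x r0); [reflexivity | lra]. Qed.

Lemma glue_gt r0 f g x : r0 < x -> glue r0 f g x = g x.
Proof. intros Hx. unfold glue. destruct (Rle_dec x r0); [lra | reflexivity]. Qed.

Lemma locally_glue_lt r0 f g x : x < r0 -> locally x (fun y => f y = glue r0 f g y).
Proof.
  intros Hx. exists (mkposreal (r0 - x) ltac:(lra)). intros y Hy.
  change (Rabs (y - x) < r0 - x) in Hy. apply Rabs_lt_between in Hy.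
  symmetry. apply glue_le. lra.
Qed.

Lemma locally_glue_gt r0 f g x : r0 < x -> locally x (fun y => g y = glue r0 f g y).
Proof.
  intros Hx. exists (mkposreal (x - r0) ltac:(lra)). intros y Hy.
  change (Rabs (y - x) < x - r0) in Hy. apply Rabs_lt_between in Hy.
  symmetry. apply glue_gt. lra.
Qed.

Lemma continuous_glue (r0 : R) (f g : R -> R) (x : R) :
  (x <= r0 -> continuous f x) -> (r0 <= x -> continuous g x) -> f r0 = g r0 ->
  continuous (glue r0 f g) x.
Proof.
  intros Hf Hg Hfg. destruct (Rtotal_order x r0) as [Hlt | [-> | Hgt]].
  - apply (continuous_ext_loc _ f); [apply locally_glue_lt, Hlt | apply Hf; lra].
  - apply filterlim_locally. intros e.
    pose proof (proj1 (filterlim_locally _ _) (Hf (Rle_refl _)) e) as Hfe.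
    pose proof (proj1 (filterlim_locally _ _) (Hg (Rle_refl _)) e) as Hge.
    generalize (filter_and _ _ Hfe Hge). apply filter_imp. intros y [Hy1 Hy2].
    rewrite (glue_le r0 f g r0) by lra. unfold glue.
    destruct (Rle_dec y r0); [exact Hy1 | rewrite Hfg; exact Hy2].
  - apply (continuous_ext_loc _ g); [apply locally_glue_gt, Hgt | apply Hg; lra].
Qed.

Lemma is_derive_glue (r0 : R) (f g df dg : R -> R) (x : R) :
  (x <= r0 -> is_derive f x (df x)) -> (r0 <= x -> is_derive g x (dg x)) ->
  f r0 = g r0 -> df r0 = dg r0 ->
  is_derive (glue r0 f g) x (glue r0 df dg x).
Proof.
  intros Hf Hg Hfg Hdfg. destruct (Rtotal_order x r0) as [Hlt | [-> | Hgt]].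
  - rewrite glue_le by lra.
    apply (is_derive_ext_loc f); [apply locally_glue_lt, Hlt | apply Hf; lra].
  - rewrite glue_le by lra. apply is_derive_Reals. intros e He.
    destruct (proj1 (is_derive_Reals _ _ _) (Hf (Rle_refl _)) e He) as [d1 Hd1].
    destruct (proj1 (is_derive_Reals _ _ _) (Hg (Rle_refl _)) e He) as [d2 Hd2].
    assert (Hd : 0 < Rmin d1 d2) by (apply Rmin_glb_lt; apply cond_pos).
    exists (mkposreal _ Hd). intros h Hh0 Hh. simpl in Hh.
    pose proof (Rmin_l d1 d2). pose proof (Rmin_r d1 d2).
    rewrite (glue_le r0 f g r0) by lra. unfold glue at 1.
    destruct (Rle_dec (r0 + h) r0).
    + apply Hd1; [exact Hh0 | lra].
    + rewrite Hfg, Hdfg. apply Hd2; [exact Hh0 | lra].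
  - rewrite glue_gt by lra.
    apply (is_derive_ext_loc g); [apply locally_glue_gt, Hgt | apply Hg; lra].
Qed.

Lemma C0_half_of_continuous f : (forall x, 0 <= x -> continuous f x) -> C0_half f.
Proof.
  intros Hf. split.
  - intros x Hx. apply Hf. lra.
  - eapply filterlim_filter_le_1; [apply filter_le_within | apply Hf; lra].
Qed.

Lemma is_right_derive_of_is_derive f x l : is_derive f x l -> is_right_derive f x l.
Proof.
  intros Hd. apply filterlim_locally. intros e.
  destruct (proj1 (is_derive_Reals _ _ _) Hd e (cond_pos e)) as [d Hdl].
  exists d. intros h Hh Hpos. apply Hdl; [lra |].
  change (Rabs (h - 0) < d) in Hh. rewrite Rminus_0_r in Hh. exact Hh.
Qed.

Lemma C2_half_of_is_derive f d1 d2 :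
  (forall x, 0 <= x -> is_derive f x (d1 x) /\ is_derive d1 x (d2 x) /\ continuous d2 x) ->
  C2_half f.
Proof.
  intros Hf. exists d1, d2. destruct (Hf 0 (Rle_refl 0)) as [H1 [H2 H3]].
  split; [intros x Hx; apply Hf; lra |].
  split; [apply is_right_derive_of_is_derive, H1 |].
  split; [apply is_right_derive_of_is_derive, H2 |].
  eapply filterlim_filter_le_1; [apply filter_le_within | exact H3].
Qed.

(** * The half bump *)

Section HalfBump.

Variables D chi eps a beta om s : R.
Hypotheses (hD : 0 < D) (hchi : 0 < chi) (heps : 0 < eps) (hbeta : 0 < beta) (hom : 0 < om).
Hypothesis om_sq : om ^ 2 = a * chi / (D * eps) - beta ^ 2.
Hypotheses (hs : 0 < s) (hJ0s : J0 s < 0).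
Hypothesis J0_decreasing : forall p q, 0 <= p < q -> q <= s -> J0 q < J0 p.
Hypothesis s_matching : mismatch (beta / om) s = 0.

(* Normalisation [phi r0 = 1]; [K1] is the constant solution of the inner equation. *)
Let r0 := s / om.
Let B := / K0 (beta * r0).
Let K1 := 1 + beta ^ 2 / om ^ 2.
Let A := (1 - K1) / J0 s.

Let phi_in t := K1 + A * J0 (om * t).
Let phi_in' t := A * om * J0' (om * t).
Let phi_in'' t := A * om * om * J0'' (om * t).
Let phi_out t := B * K0 (beta * t).
Let phi_out' t := B * beta * K0' (beta * t).
Let phi_out'' t := B * beta * beta * K0'' (beta * t).
Let rho_in t := chi / eps * (phi_in t - 1).

Let phi := glue r0 phi_in phi_out.
Let phi' := glue r0 phi_in' phi_out'.
Let phi'' := glue r0 phi_in'' phi_out''.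
Let rho := glue r0 rho_in (fun _ => 0).

Lemma r0_pos : 0 < r0.
Proof. apply Rdiv_lt_0_compat; assumption. Qed.

Lemma om_r0 : om * r0 = s.
Proof. unfold r0. field. lra. Qed.

Lemma beta_r0 : beta * r0 = beta / om * s.
Proof. unfold r0. field. lra. Qed.

Lemma K0_beta_r0_pos : 0 < K0 (beta * r0).
Proof. apply K0_pos, Rmult_lt_0_compat; [exact hbeta | exact r0_pos]. Qed.

Lemma A_pos : 0 < A.
Proof.
  replace A with (beta ^ 2 / om ^ 2 / - J0 s) by (unfold A, K1; field; lra).
  apply Rdiv_lt_0_compat; [apply Rdiv_lt_0_compat; apply pow_lt |]; lra.
Qed.

Lemma phi_in_r0 : phi_in r0 = 1.
Proof. unfold phi_in, A. rewrite om_r0. field. lra. Qed.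

Lemma phi_out_r0 : phi_out r0 = 1.
Proof. unfold phi_out, B. pose proof K0_beta_r0_pos. field. lra. Qed.

Lemma phi_in'_r0 : phi_in' r0 = phi_out' r0.
Proof.
  pose proof K0_beta_r0_pos. unfold mismatch in s_matching. rewrite <- beta_r0 in s_matching.
  assert (HK0' : K0' (beta * r0) = - (beta / om * J0' s * K0 (beta * r0)) / J0 s).
  { apply Rmult_eq_reg_r with (J0 s); [|lra].
    replace (- (beta / om * J0' s * K0 (beta * r0)) / J0 s * J0 s)
      with (- (beta / om * J0' s * K0 (beta * r0))) by (field; lra).
    lra. }
  unfold phi_in', phi_out', A, B, K1. rewrite om_r0, HK0'. field. lra.
Qed.

Lemma phi_in_ode t : t <> 0 -> phi_in'' t + phi_in' t / t = - om ^ 2 * (phi_in t - K1).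
Proof.
  intros Ht. unfold phi_in'', phi_in', phi_in.
  replace (- om ^ 2 * (K1 + A * J0 (om * t) - K1)) with (-1 * om ^ 2 * (A * J0 (om * t)))
    by ring.
  apply (radial_ode_scale J0 J0' J0'' (-1) A om t); [lra | exact Ht |].
  apply bessel_ode; [lra | apply Rmult_integral_contrapositive; lra].
Qed.

Lemma phi_out_ode t : 0 < t -> phi_out'' t + phi_out' t / t = beta ^ 2 * phi_out t.
Proof.
  intros Ht. unfold phi_out'', phi_out', phi_out.
  rewrite <- (Rmult_1_l (beta ^ 2)).
  apply (radial_ode_scale K0 K0' K0'' 1 B beta t); [lra | lra |].
  unfold K0''. field. split; lra.
Qed.

Lemma phi_in''_r0 : phi_in'' r0 = phi_out'' r0.
Proof.
  pose proof r0_pos as Hr0.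
  pose proof (phi_in_ode r0 ltac:(lra)) as Hin. pose proof (phi_out_ode r0 Hr0) as Hout.
  rewrite phi_in_r0, phi_in'_r0 in Hin. rewrite phi_out_r0 in Hout.
  unfold K1 in Hin. replace (- om ^ 2 * (1 - (1 + beta ^ 2 / om ^ 2))) with (beta ^ 2) in Hin
    by (field; lra).
  lra.
Qed.

Lemma phi_in_C2_at x : C2_at phi_in phi_in' phi_in'' x.
Proof. apply C2_at_shift, (C2_at_scale J0 J0' J0''), C2_at_bessel. lra. Qed.

Lemma phi_out_C2_at x : r0 <= x -> C2_at phi_out phi_out' phi_out'' x.
Proof.
  intros Hx. pose proof r0_pos.
  apply (C2_at_scale K0 K0' K0''), C2_at_K0, Rmult_lt_0_compat; lra.
Qed.

Lemma phi_C2_at x : C2_at phi phi' phi'' x.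
Proof.
  pose proof (phi_in_C2_at x) as Hin. pose proof (phi_out_C2_at x) as Hout.
  split; [|split].
  - apply is_derive_glue; [intros; apply Hin | intros Hx; apply Hout, Hx | | exact phi_in'_r0].
    rewrite phi_in_r0, phi_out_r0. reflexivity.
  - apply is_derive_glue; [intros; apply Hin | intros Hx; apply Hout, Hx | exact phi_in'_r0 | ].
    exact phi_in''_r0.
  - apply continuous_glue; [intros; apply Hin | intros Hx; apply Hout, Hx | exact phi_in''_r0].
Qed.

Lemma J0_om_bounds t : 0 <= t <= r0 -> J0 s <= J0 (om * t) <= 1.
Proof.
  intros Ht. pose proof r0_pos. pose proof om_r0.
  assert (0 <= om * t <= s)
    by (split; [apply Rmult_le_pos | rewrite <- om_r0; apply Rmult_le_compat_l]; lra).
  split.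
  - destruct (Req_dec (om * t) s) as [-> | Hne]; [lra|].
    apply Rlt_le, J0_decreasing; lra.
  - rewrite <- (bessel_0 (-1)). destruct (Req_dec (om * t) 0) as [-> | Hne]; [lra|].
    apply Rlt_le, J0_decreasing; lra.
Qed.

Lemma J0_om_gt t : 0 <= t < r0 -> J0 s < J0 (om * t).
Proof.
  intros Ht. apply J0_decreasing; [split |].
  - apply Rmult_le_pos; lra.
  - rewrite <- om_r0. apply Rmult_lt_compat_l; lra.
  - lra.
Qed.

Lemma phi_in_sub_1 t : phi_in t - 1 = A * (J0 (om * t) - J0 s).
Proof. rewrite <- phi_in_r0. unfold phi_in. rewrite om_r0. ring. Qed.

Lemma rho_in_r0 : rho_in r0 = 0.
Proof. unfold rho_in. rewrite phi_in_r0. ring. Qed.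

Lemma rho_in_pos t : 0 <= t < r0 -> 0 < rho_in t.
Proof.
  intros Ht. unfold rho_in. rewrite phi_in_sub_1. pose proof A_pos. pose proof (J0_om_gt t Ht).
  apply Rmult_lt_0_compat; [apply Rdiv_lt_0_compat; lra | apply Rmult_lt_0_compat; lra].
Qed.

Lemma phi_in_bounds t : 0 <= t <= r0 -> 1 <= phi_in t <= 1 + A * (1 - J0 s).
Proof.
  intros Ht. pose proof A_pos. pose proof (J0_om_bounds t Ht).
  pose proof (phi_in_sub_1 t). split; nra.
Qed.

Lemma phi_out_bounds t : r0 <= t -> 0 < phi_out t <= B / (beta * r0 * I0' (beta * r0)).
Proof.
  intros Ht. pose proof r0_pos. pose proof K0_beta_r0_pos.
  assert (0 < beta * r0) by (apply Rmult_lt_0_compat; lra).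
  assert (beta * r0 <= beta * t) by (apply Rmult_le_compat_l; lra).
  assert (HB : 0 < B) by (apply Rinv_0_lt_compat; lra).
  pose proof (I0'_pos (beta * r0) ltac:(lra)).
  pose proof (mul_I0'_le (beta * r0) (beta * t) ltac:(lra)).
  unfold phi_out. split.
  - apply Rmult_lt_0_compat; [lra | apply K0_pos; lra].
  - unfold Rdiv. apply Rmult_le_compat_l; [lra |].
    eapply Rle_trans; [apply K0_le; lra |]. apply Rinv_le_contravar; nra.
Qed.

Lemma phi_pos t : 0 <= t -> 0 < phi t.
Proof.
  intros Ht. unfold phi. destruct (Rle_dec t r0).
  - rewrite glue_le by lra. pose proof (phi_in_bounds t ltac:(lra)). lra.
  - rewrite glue_gt by lra. apply (phi_out_bounds t). lra.
Qed.

Lemma phi_bounded : exists M, forall t, 0 <= t -> Rabs (phi t) <= M.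
Proof.
  exists (1 + A * (1 - J0 s) + B / (beta * r0 * I0' (beta * r0))).
  intros t Ht. pose proof (phi_in_bounds r0 ltac:(pose proof r0_pos; lra)).
  pose proof (phi_out_bounds r0 (Rle_refl _)).
  rewrite Rabs_pos_eq by (apply Rlt_le, phi_pos, Ht). unfold phi. destruct (Rle_dec t r0).
  - rewrite glue_le by lra. pose proof (phi_in_bounds t ltac:(lra)). lra.
  - rewrite glue_gt by lra. pose proof (phi_out_bounds t ltac:(lra)). lra.
Qed.

Lemma rho_pos t : 0 <= t < r0 -> 0 < rho t.
Proof. intros Ht. unfold rho. rewrite glue_le by lra. apply rho_in_pos, Ht. Qed.

Lemma rho_zero t : r0 <= t -> rho t = 0.
Proof.
  intros Ht. unfold rho. destruct (Req_dec t r0) as [-> | Hne].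
  - rewrite glue_le by lra. exact rho_in_r0.
  - rewrite glue_gt by lra. reflexivity.
Qed.

Lemma rho_nonneg t : 0 <= t -> 0 <= rho t.
Proof.
  intros Ht. destruct (Rlt_le_dec t r0).
  - apply Rlt_le, rho_pos. lra.
  - rewrite rho_zero by exact r. lra.
Qed.

Lemma is_derive_rho_in x : is_derive rho_in x (chi / eps * phi_in' x).
Proof.
  destruct (phi_in_C2_at x) as [Hd _]. unfold rho_in. auto_derive.
  - exact (ex_intro _ _ Hd).
  - change (fun y => phi_in y) with phi_in. rewrite (is_derive_unique _ _ _ Hd). ring.
Qed.

Lemma continuous_rho x : continuous rho x.
Proof.
  apply continuous_glue; [| intros; apply continuous_const | exact rho_in_r0].
  intros _. apply (ex_derive_continuous rho_in). exact (ex_intro _ _ (is_derive_rho_in x)).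
Qed.

Lemma is_derive_pressure x : is_derive (fun t => eps / 2 * rho t ^ 2) x (chi * rho x * phi' x).
Proof.
  apply (is_derive_ext (glue r0 (fun t => eps / 2 * rho_in t ^ 2) (fun _ => eps / 2 * 0 ^ 2))).
  { intros t. unfold rho, glue. destruct (Rle_dec t r0); reflexivity. }
  apply (is_derive_eq _ _ (glue r0 (fun t => chi * rho_in t * phi_in' t) (fun _ => 0) x));
    [| unfold rho, phi', glue; destruct (Rle_dec x r0); ring].
  apply is_derive_glue; [| intros; exact (is_derive_const _ x) | |];
    [| rewrite rho_in_r0; reflexivity | rewrite rho_in_r0; ring].
  intros _. destruct (phi_in_C2_at x) as [Hd _].
  exact (is_derive_half_square_affine phi_in eps chi x (phi_in' x) ltac:(lra) Hd).
Qed.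

Lemma phi_ode x : 0 < x -> D * phi'' x + D * phi' x / x + a * rho x - D * beta ^ 2 * phi x = 0.
Proof.
  intros Hx. assert (Hac : a * chi / eps = D * (om ^ 2 + beta ^ 2)) by (rewrite om_sq; field; lra).
  unfold phi'', phi', rho, phi, glue. destruct (Rle_dec x r0).
  - replace (D * phi_in'' x + D * phi_in' x / x + a * rho_in x - D * beta ^ 2 * phi_in x)
      with (D * (phi_in'' x + phi_in' x / x) + a * chi / eps * (phi_in x - 1)
            - D * beta ^ 2 * phi_in x) by (unfold rho_in; field; lra).
    rewrite phi_in_ode, Hac by lra. unfold K1. field. lra.
  - replace (D * phi_out'' x + D * phi_out' x / x + a * 0 - D * beta ^ 2 * phi_out x)
      with (D * (phi_out'' x + phi_out' x / x) - D * beta ^ 2 * phi_out x) by (field; lra).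
    rewrite phi_out_ode by lra. ring.
Qed.

Lemma half_bump_exists :
  let b := D * beta ^ 2 in
  exists (rho0 phi0 r0 : R) (rho phi : R -> R),
    0 < rho0 /\ 0 < phi0 /\ 0 < r0 /\
    C0_half rho /\ C2_half phi /\
    (forall r, 0 <= r -> 0 <= rho r) /\
    (forall r, 0 <= r -> 0 <= phi r) /\
    (exists M, forall r, 0 <= r -> Rabs (phi r) <= M) /\
    (forall r, 0 < r ->
       ex_derive (fun s => eps / 2 * (rho s) ^ 2) r /\
       Derive (fun s => eps / 2 * (rho s) ^ 2) r = chi * rho r * Derive phi r) /\
    (forall r, 0 < r ->
       D * Derive (Derive phi) r + D * Derive phi r / r + a * rho r - b * phi r = 0) /\
    rho 0 = rho0 /\ phi 0 = phi0 /\
    (forall r, 0 <= r < r0 -> 0 < rho r) /\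
    (forall r, r0 <= r -> rho r = 0).
Proof.
  intros b. pose proof r0_pos as Hr0.
  assert (HDphi : forall x, Derive phi x = phi' x) by (intro; apply is_derive_unique, phi_C2_at).
  assert (HDDphi : forall x, Derive (Derive phi) x = phi'' x).
  { intros x. rewrite (Derive_ext _ _ _ HDphi). apply is_derive_unique, phi_C2_at. }
  exists (rho 0), (phi 0), r0, rho, phi.
  split; [apply rho_pos; lra |].
  split; [apply phi_pos; lra |].
  split; [exact r0_pos |].
  split; [apply C0_half_of_continuous; intros; apply continuous_rho |].
  split; [apply (C2_half_of_is_derive phi phi' phi''); intros; apply phi_C2_at |].
  split; [exact rho_nonneg |].
  split; [intros t Ht; apply Rlt_le, phi_pos, Ht |].
  split; [exact phi_bounded |].
  split; [intros t _; rewrite HDphi; exact (conj (ex_intro _ _ (is_derive_pressure t))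
                                      (is_derive_unique _ _ _ (is_derive_pressure t))) |].
  split; [intros t Ht; rewrite HDDphi, HDphi; apply phi_ode, Ht |].
  split; [reflexivity |].
  split; [reflexivity |].
  split; [exact rho_pos | exact rho_zero].
Qed.

End HalfBump.

Theorem mainTheorem1 (D chi eps a beta : R)
  (hD : 0 < D) (hchi : 0 < chi) (heps : 0 < eps) (ha : 0 < a) (hbeta : 0 < beta)
  (homega : 0 < a * chi / (D * eps) - beta ^ 2) :
  let b := D * beta ^ 2 in
  exists (rho0 phi0 r0 : R) (rho phi : R -> R),
    0 < rho0 /\ 0 < phi0 /\ 0 < r0 /\
    C0_half rho /\ C2_half phi /\
    (forall r, 0 <= r -> 0 <= rho r) /\
    (forall r, 0 <= r -> 0 <= phi r) /\
    (exists M, forall r, 0 <= r -> Rabs (phi r) <= M) /\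
    (forall r, 0 < r ->
       ex_derive (fun s => eps / 2 * (rho s) ^ 2) r /\
       Derive (fun s => eps / 2 * (rho s) ^ 2) r = chi * rho r * Derive phi r) /\
    (forall r, 0 < r ->
       D * Derive (Derive phi) r + D * Derive phi r / r + a * rho r - b * phi r = 0) /\
    rho 0 = rho0 /\ phi 0 = phi0 /\
    (forall r, 0 <= r < r0 -> 0 < rho r) /\
    (forall r, r0 <= r -> rho r = 0).
Proof.
  set (om := sqrt (a * chi / (D * eps) - beta ^ 2)).
  assert (hom : 0 < om) by (apply sqrt_lt_R0, homega).
  assert (om_sq : om ^ 2 = a * chi / (D * eps) - beta ^ 2) by (apply pow2_sqrt; lra).
  destruct (exists_matching_point (beta / om)) as [s [hs [hJ0s [hJ0_dec hmatch]]]].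
  { apply Rdiv_lt_0_compat; assumption. }
  apply (half_bump_exists D chi eps a beta om s); assumption.
Qed.
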